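(* Let $A\in\mathbb{R}^{m\times n}$ be semimonotone ($A^{\dagger}\geq 0$) and let $A=U_1-V_1=U_2-V_2$ be two convergent proper nonnegative splittings of different types (one of type I and the other of type II). If there exists $\alpha$ with $0<\alpha\leq 1$ such that $V_1\leq \alpha V_2$ and $\rho(A^{\dagger}V_i)>0$ for $i=1$ or $i=2$, then $\rho(U_1^{\dagger}V_1)\leq\rho(U_2^{\dagger}V_2)<1$ whenever $\alpha=1$, and $\rho(U_1^{\dagger}V_1)<\rho(U_2^{\dagger}V_2)<1$ whenever $0<\alpha<1$.
   Context: $A^{\dagger}$ denotes the Moore–Penrose inverse and $\rho(\cdot)$ the spectral radius. Inequalities are entrywise. A splitting $A=U-V$ is proper if $R(U)=R(A)$ and $N(U)=N(A)$; it is convergent if $\rho(U^{\dagger}V)<1$. A proper splitting is a proper nonnegative splitting of type I if $U^{\dagger}V\geq 0$, and of type II if $VU^{\dagger}\geq 0$. *)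

From HB Require Import structures.
From mathcomp Require Import all_boot all_order all_algebra.
From mathcomp Require Import complex.
Set Implicit Arguments. Unset Strict Implicit. Unset Printing Implicit Defensive.
Import Order.TTheory GRing.Theory Num.Theory.
Local Open Scope ring_scope.

Section Defs.
Variable R : rcfType.

Definition is_MP_inverse m n (A : 'M[R]_(m, n)) (X : 'M[R]_(n, m)) : Prop :=
  [/\ A *m X *m A = A, X *m A *m X = X,
      (A *m X)^T = A *m X & (X *m A)^T = X *m A].

Definition mx_nonneg m n (M : 'M[R]_(m, n)) : Prop := forall i j, 0 <= M i j.

Definition mx_le m n (M N : 'M[R]_(m, n)) : Prop := forall i j, M i j <= N i j.

(* spectral radius: the largest modulus of a (complex) eigenvalue, i.e. of a
   root of the characteristic polynomial over R[i] (0 for the empty matrix). *)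
Definition spectral_radius n (M : 'M[R]_n) : R :=
  \big[Num.max/0]_(z <- sval (closed_field_poly_normal
                       (char_poly (map_mx (real_complex R) M)))) ComplexField.Normc.normc z.

(* range space R(M) = column space *)
Definition range_eq m n (U A : 'M[R]_(m, n)) : Prop := (U^T == A^T)%MS.

Definition null_eq m n (U A : 'M[R]_(m, n)) : Prop :=
  forall x : 'cV[R]_n, U *m x = 0 <-> A *m x = 0.

Definition proper_splitting m n (A U V : 'M[R]_(m, n)) : Prop :=
  A = U - V /\ range_eq U A /\ null_eq U A.

Definition convergent_splitting m n (U V : 'M[R]_(m, n)) (Ud : 'M[R]_(n, m)) : Prop :=
  spectral_radius (Ud *m V) < 1.

Definition pns_typeI m n (A U V : 'M[R]_(m, n)) (Ud : 'M[R]_(n, m)) : Prop :=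
  proper_splitting A U V /\ mx_nonneg (Ud *m V).

Definition pns_typeII m n (A U V : 'M[R]_(m, n)) (Ud : 'M[R]_(n, m)) : Prop :=
  proper_splitting A U V /\ mx_nonneg (V *m Ud).

End Defs.

From HB Require Import structures.
From mathcomp Require Import all_boot all_order all_algebra.
From mathcomp Require Import complex polyrcf.
From mathcomp.algebra_tactics Require Import ring lra.
Set Implicit Arguments. Unset Strict Implicit. Unset Printing Implicit Defensive.
Import Order.TTheory GRing.Theory Num.Theory ComplexField.Normc.
Local Open Scope ring_scope.

(* The identities R(U) = R(A), N(U) = N(A) and the Penrose equations give
   (A^+ V)(I - U^+ V) = U^+ V for a proper splitting A = U - V, and
   (I - V U^+)(V A^+) = V U^+.  For a nonnegative P with rho(P) < 1, every G
   with G (I - P) = P satisfies rho(G) = rho(P) / (1 - rho(P)).  Hence, for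
   either type, rho(A^+ V_i) = f(rho(U_i^+ V_i)) with f(x) = x / (1 - x),
   which increases strictly on [0, 1).  Monotonicity of the spectral radius
   on nonnegative matrices gives rho(A^+ V_1) <= alpha rho(A^+ V_2), and the
   claims follow by inverting f.

   The Perron-Frobenius facts used (rho(T) is an eigenvalue of T >= 0,
   monotonicity of rho, (sI - B)^-1 >= 0 for s > rho(B)) are proved over an
   arbitrary real closed field, without Neumann series. *)

Local Notation rho := spectral_radius.

Lemma invmxM (R : comUnitRingType) n (A B : 'M[R]_n) :
  A \in unitmx -> B \in unitmx -> invmx (A *m B) = invmx B *m invmx A.
Proof.
move=> A_unit B_unit; have AB_unit : A *m B \in unitmx by rewrite unitmx_mul A_unit.
have inv_AB : invmx B *m invmx A *m (A *m B) = 1%:M.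
  by rewrite mulmxA mulmxKV // mulVmx.
by rewrite -[invmx _]mul1mx -inv_AB -mulmxA mulmxV ?mulmx1.
Qed.

Lemma mulmx_1B_sym (R : comUnitRingType) n (S K : 'M[R]_n) :
  (1%:M - S) \in unitmx -> (1%:M - S) *m K = S -> K *m (1%:M - S) = S.
Proof.
move=> IS_unit ISK.
have S_comm : (1%:M - S) *m S = S *m (1%:M - S).
  by rewrite mulmxBl mulmxBr mul1mx mulmx1.
by rewrite -[K](mulKmx IS_unit) ISK -mulmxA -S_comm mulKmx.
Qed.

Lemma count_lt_mem d (T : porderType d) (s : seq T) (x y : T) :
  (x < y)%O -> x \in s -> (count (< x)%O s < count (< y)%O s)%N.
Proof.
move=> xy; elim: s => //= z s IHs; rewrite inE => /predU1P[<-|xs].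
  rewrite ltxx xy ltnS add0n; apply: sub_count => t /= tx.
  exact: lt_trans tx xy.
rewrite -addnS leq_add ?IHs //.
by case: (boolP (z < x)%O) => //= zx; rewrite (lt_trans zx xy).
Qed.

Lemma ler_odds (R : realFieldType) (x y : R) : x < 1 -> y < 1 ->
  (x / (1 - x) <= y / (1 - y)) = (x <= y).
Proof.
move=> x_lt1 y_lt1; rewrite ler_pdivrMr ?subr_gt0 // mulrAC ler_pdivlMr ?subr_gt0 //.
by rewrite !mulrBr !mulr1 mulrC lerD2r.
Qed.

Lemma ltr_odds (R : realFieldType) (x y : R) : x < 1 -> y < 1 ->
  (x / (1 - x) < y / (1 - y)) = (x < y).
Proof. by move=> x_lt1 y_lt1; rewrite !ltNge ler_odds. Qed.

Section Spectrum.
Variable R : rcfType.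
Local Notation cplx := (map_mx (real_complex R)).

Definition spectrum n (M : 'M[R]_n) : seq R[i] :=
  sval (closed_field_poly_normal (char_poly (cplx M))).

Lemma spectrumP n (M : 'M[R]_n) (l : R[i]) :
  reflect (exists2 v : 'rV_n, v *m cplx M = l *: v & v != 0) (l \in spectrum M).
Proof.
rewrite /spectrum; case: closed_field_poly_normal => /= r charM.
have -> : (l \in r) = root (char_poly (cplx M)) l.
  rewrite [in RHS]charM rootZ ?root_prod_XsubC //.
  by rewrite (monicP (char_poly_monic _)) oner_eq0.
by rewrite -eigenvalue_root_char; apply: eigenvalueP.
Qed.

Lemma spectrum_real n (M : 'M[R]_n) (u : R) :
  (u%:M - M) \notin unitmx -> real_complex R u \in spectrum M.
Proof.
rewrite unitmxE unitfE negbK => /det0P [v v_neq0 /eqP].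
rewrite mulmxBr mul_mx_scalar subr_eq0 => /eqP vM.
apply/spectrumP; exists (cplx v); last by rewrite map_mx_eq0.
by rewrite -map_mxM -vM map_mxZ.
Qed.

Lemma sr_ge0 n (M : 'M[R]_n) : 0 <= rho M.
Proof. exact: bigmax_ge_id. Qed.

Lemma normc_le_sr n (M : 'M[R]_n) l : l \in spectrum M -> normc l <= rho M.
Proof. by move=> lM; apply: le_bigmax_seq. Qed.

Lemma sr_le n (M : 'M[R]_n) x :
  0 <= x -> (forall l, l \in spectrum M -> normc l <= x) -> rho M <= x.
Proof. by move=> x_ge0 Mx; rewrite /spectral_radius big_seq; apply: bigmax_le. Qed.

Lemma sr_attained n (M : 'M[R]_n) :
  0 < rho M -> exists2 l, l \in spectrum M & normc l = rho M.
Proof.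
have -> : rho M = \big[Num.max/0]_(z <- spectrum M) normc z by [].
elim: (spectrum M) => [|a s IH]; first by rewrite big_nil ltxx.
rewrite big_cons; set r := \big[_/_]_(z <- s) _ in IH *.
have [_ _|lt /IH[l ls <-]] := leP r (normc a).
  by exists a; rewrite ?mem_head.
by exists l; rewrite // inE ls orbT.
Qed.

End Spectrum.

Section NonnegMatrices.
Variable R : rcfType.

Lemma mx_le_trans m n (A B C : 'M[R]_(m, n)) : mx_le A B -> mx_le B C -> mx_le A C.
Proof. by move=> AB BC i j; apply: le_trans (AB i j) (BC i j). Qed.

Lemma mx_nonneg_mul m n p (A : 'M[R]_(m, n)) (B : 'M[R]_(n, p)) :
  mx_nonneg A -> mx_nonneg B -> mx_nonneg (A *m B).
Proof. by move=> A_ge0 B_ge0 i j; rewrite mxE sumr_ge0 // => k _; rewrite mulr_ge0. Qed.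

Lemma mx_le_mull m n p (P : 'M[R]_(m, n)) (A B : 'M[R]_(n, p)) :
  mx_nonneg P -> mx_le A B -> mx_le (P *m A) (P *m B).
Proof. by move=> P_ge0 AB i j; rewrite !mxE ler_sum // => k _; rewrite ler_wpM2l. Qed.

Lemma mx_le_mulr m n p (P : 'M[R]_(n, p)) (A B : 'M[R]_(m, n)) :
  mx_nonneg P -> mx_le A B -> mx_le (A *m P) (B *m P).
Proof. by move=> P_ge0 AB i j; rewrite !mxE ler_sum // => k _; rewrite ler_wpM2r. Qed.

(* At a minimal entry [x j0], [0 <= (x (1 - N)) j0 <= x j0 (1 - \sum_i N i j0)]. *)
Lemma min_principle n (N : 'M[R]_n) (x : 'rV[R]_n) : mx_nonneg N ->
  (forall j, \sum_i N i j < 1) -> mx_nonneg (x *m (1%:M - N)) -> mx_nonneg x.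
Proof.
case: n N x => [|n] N x N_ge0 colN xN_ge0 i j; first by case: j.
have [j0 _ x_min] := @arg_minP _ _ _ ord0 xpredT (x 0) isT.
have colN0 := colN j0; have colN0_ge0 : 0 <= \sum_i N i j0 by rewrite sumr_ge0.
have : x 0 j0 * \sum_i N i j0 <= \sum_i x 0 i * N i j0.
  by rewrite mulr_sumr ler_sum // => k _; rewrite ler_wpM2r ?x_min.
have := xN_ge0 0 j0; rewrite mulmxBr mulmx1 !mxE (ord1 i) => xN0 xN_le.
suff : 0 <= x 0 j0 by move/le_trans; apply; rewrite x_min.
nra.
Qed.

Lemma colsum_lt1_inv_nonneg n (N : 'M[R]_n) : mx_nonneg N ->
  (forall j, \sum_i N i j < 1) ->
  (1%:M - N) \in unitmx /\ mx_nonneg (invmx (1%:M - N)).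
Proof.
move=> N_ge0 colN.
have ker0 (v : 'rV[R]_n) : v *m (1%:M - N) = 0 -> v = 0.
  move=> vN0; have zero_ge0 : mx_nonneg (0 : 'rV[R]_n) by move=> i j; rewrite mxE.
  have v_ge0 : mx_nonneg v by apply: min_principle N_ge0 colN _; rewrite vN0.
  have Nv_ge0 : mx_nonneg (- v).
    by apply: min_principle N_ge0 colN _; rewrite mulNmx vN0 oppr0.
  apply/matrixP => i j; apply/eqP; rewrite mxE eq_le v_ge0 andbT -oppr_ge0.
  by have := Nv_ge0 i j; rewrite mxE.
have N_unit : (1%:M - N) \in unitmx.
  rewrite unitmxE unitfE; apply/negP => /det0P [v v_neq0 /ker0 v0].
  by rewrite v0 eqxx in v_neq0.
split => // i j.
have row_ge0 : mx_nonneg (row i (invmx (1%:M - N))).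
  apply: min_principle N_ge0 colN _; rewrite rowE -mulmxA mulVmx // mulmx1.
  by move=> a b; rewrite mxE; case: (_ && _).
by have := row_ge0 0 j; rewrite mxE.
Qed.

Lemma inv_nonneg_perturb n (M B : 'M[R]_n) :
  M \in unitmx -> mx_nonneg (invmx M) -> mx_nonneg B ->
  exists2 h, 0 < h & forall e, 0 <= e -> e <= h ->
    (M - e *: B) \in unitmx /\ mx_nonneg (invmx (M - e *: B)).
Proof.
move=> M_unit W_ge0 B_ge0; pose K := invmx M *m B.
have K_ge0 : mx_nonneg K by apply: mx_nonneg_mul.
pose S := \sum_j \sum_i K i j.
have colK_ge0 j : 0 <= \sum_i K i j by rewrite sumr_ge0.
have colK_le j : \sum_i K i j <= S.
  by rewrite /S [X in _ <= X](bigD1 j) //= lerDl sumr_ge0.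
have S_ge0 : 0 <= S by rewrite sumr_ge0.
exists (1 + S)^-1 => [|e e_ge0 e_le]; first by rewrite invr_gt0; lra.
pose N := e *: K.
have N_ge0 : mx_nonneg N by move=> i j; rewrite mxE mulr_ge0.
have colN j : \sum_i N i j < 1.
  have -> : \sum_i N i j = e * \sum_i K i j.
    by rewrite mulr_sumr; apply: eq_bigr => i _; rewrite mxE.
  have : e * (1 + S) <= 1 by rewrite -ler_pdivlMr ?mul1r //; lra.
  by have := colK_le j; have := colK_ge0 j; nra.
have [N_unit iN_ge0] := colsum_lt1_inv_nonneg N_ge0 colN.
have -> : M - e *: B = M *m (1%:M - N).
  by rewrite mulmxBr mulmx1 -scalemxAr mulmxA mulmxV // mul1mx.
by rewrite unitmx_mul M_unit N_unit invmxM //; split=> //; apply: mx_nonneg_mul.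
Qed.

End NonnegMatrices.

(* Nonnegativity of [(s - tB)^-1] is propagated from [t = 0] to [t = 1]: it
   survives small increases of [t] (inv_nonneg_perturb), and an entry of the
   inverse can only change sign at a root of the corresponding entry of the
   adjugate of the polynomial matrix [s - XB].  Since [R] need not have
   suprema, the propagation is an induction on the number of such roots. *)
Section InverseNonnegHomotopy.
Variables (R : rcfType) (n : nat) (B : 'M[R]_n) (s : R).
Hypotheses (B_ge0 : mx_nonneg B) (s_gt0 : 0 < s).
Hypothesis unit_ge_s : forall u, s <= u -> (u%:M - B) \in unitmx.

Let H t : 'M[R]_n := s%:M - t *: B.
Let inv_ge0 t := mx_nonneg (invmx (H t)).

Let H_unit t : 0 <= t -> t <= 1 -> H t \in unitmx.
Proof.
move=> t_ge0 t_le1; have [->|t_neq0] := eqVneq t 0.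
  by rewrite /H scale0r subr0 unitmxE det_scalar unitfE expf_neq0 ?gt_eqF.
have t_gt0 : 0 < t by rewrite lt_def t_neq0.
have -> : H t = t *: ((s / t)%:M - B).
  by rewrite /H scalerBr scale_scalar_mx mulrC divfK.
rewrite unitmxZ ?unitfE ?gt_eqF // unit_ge_s // ler_pdivlMr //.
have : 0 <= s * (1 - t) by rewrite mulr_ge0 ?subr_ge0 // ltW.
lra.
Qed.

Let inv_ge0_0 : inv_ge0 0.
Proof.
rewrite /inv_ge0 /H scale0r subr0 invmx_scalar => i j.
by rewrite mxE mulrn_wge0 // invr_ge0 ltW.
Qed.

Let inv_ge0_right c : 0 <= c -> c <= 1 -> inv_ge0 c ->
  exists2 h, 0 < h & forall u, c <= u -> u <= c + h -> inv_ge0 u.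
Proof.
move=> c_ge0 c_le1 Hc_ge0.
have [h h_gt0 perturb] := inv_nonneg_perturb (H_unit c_ge0 c_le1) Hc_ge0 B_ge0.
exists h => // u cu uch.
have [_] := perturb (u - c) ltac:(lra) ltac:(lra).
by rewrite /H -addrA -opprD -scalerDl subrKC.
Qed.

Let P : 'M[{poly R}]_n := \matrix_(i, j) (((s%:M : 'M[R]_n) i j)%:P - 'X * (B i j)%:P).

Let horner_P t : map_mx (horner_eval t) P = H t.
Proof.
apply/matrixP => i j; rewrite !mxE horner_evalE.
by rewrite hornerD hornerN hornerM hornerX !hornerC.
Qed.

Let D := \det P.
Let F := \adj P.

Let horner_D t : D.[t] = \det (H t).
Proof. by rewrite -horner_P det_map_mx. Qed.

Let horner_F t i j : (F i j).[t] = \adj (H t) i j.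
Proof. by rewrite -horner_P -map_mx_adj [RHS]mxE. Qed.

Let D_gt0 t : 0 <= t -> t <= 1 -> 0 < D.[t].
Proof.
have D_neq0 x : 0 <= x -> x <= 1 -> D.[x] != 0.
  by move=> x_ge0 x_le1; rewrite horner_D -unitfE -unitmxE H_unit.
move=> t_ge0 t_le1; rewrite lt_def D_neq0 //= leNgt; apply/negP => Dt_lt0.
have D0_gt0 : 0 < D.[0] by rewrite horner_D /H scale0r subr0 det_scalar exprn_gt0.
have [x] : {x | x \in `[0, t] & root D x}.
  by apply: polyrcf.poly_ivt => //; rewrite pmulr_rle0 // ltW.
rewrite in_itv /= => /andP[x_ge0 xt] /rootP Dx.
by move: (D_neq0 x x_ge0 (le_trans xt t_le1)); rewrite Dx eqxx.
Qed.

Let inv_ge0E t : 0 <= t -> t <= 1 -> inv_ge0 t <-> forall i j, 0 <= (F i j).[t].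
Proof.
move=> t_ge0 t_le1.
have invE i j : invmx (H t) i j = (D.[t])^-1 * (F i j).[t].
  by rewrite /invmx H_unit // mxE horner_D horner_F.
by split=> Ht_ge0 i j; have := Ht_ge0 i j; rewrite ?invE pmulr_rge0 ?invr_gt0 ?D_gt0.
Qed.

Let Q := \prod_(k : 'I_n * 'I_n | F k.1 k.2 != 0) F k.1 k.2.

Let Q_neq0 : Q != 0.
Proof. by apply/prodf_neq0 => k. Qed.

Let root_Q i j x : F i j != 0 -> root (F i j) x -> root Q x.
Proof. by move=> Fij_neq0 Fx; rewrite /Q (bigD1 (i, j)) //= rootM Fx. Qed.

Let inv_ge0_no_root c t : 0 <= c -> c < t -> t <= 1 -> inv_ge0 c ->
  (forall z, c < z -> z < t -> ~~ root Q z) -> inv_ge0 t.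
Proof.
move=> c_ge0 ct t_le1 Hc_ge0 no_root.
have [h h_gt0 right_c] := inv_ge0_right c_ge0 (ltW (lt_le_trans ct t_le1)) Hc_ge0.
pose b := Num.min (c + h) ((c + t) / 2).
have cb : c < b by rewrite lt_min; apply/andP; split; lra.
have b_le : b <= (c + t) / 2 by rewrite ge_min lexx orbT.
have bt : b < t by lra.
have Hb_ge0 := right_c b (ltW cb) ltac:(by rewrite ge_min lexx).
have b_ge0 : 0 <= b by lra.
have b_le1 : b <= 1 by lra.
have t_ge0 : 0 <= t by lra.
apply/(inv_ge0E t_ge0 t_le1) => i j.
have [->|Fij_neq0] := eqVneq (F i j) 0; first by rewrite horner0.
rewrite leNgt; apply/negP => Ft_lt0.
have [x] : {x | x \in `[b, t] & root (F i j) x}.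
  apply: polyrcf.poly_ivt; first exact: ltW.
  by apply: mulr_ge0_le0; [exact: (inv_ge0E b_ge0 b_le1).1 | exact: ltW].
rewrite in_itv /= => /andP[bx xt] Fx.
have xt' : x < t.
  by rewrite lt_neqAle xt andbT; apply: contraTneq Fx => ->; rewrite rootE lt_eqF.
by move: (no_root x (lt_le_trans cb bx) xt'); rewrite (root_Q Fij_neq0 Fx).
Qed.

Let inv_ge0_roots t : 0 <= t -> t <= 1 ->
  (forall c, 0 < c -> c < t -> root Q c -> inv_ge0 c) -> inv_ge0 t.
Proof.
move=> t_ge0 t_le1 at_roots; have [->|t_neq0] := eqVneq t 0; first exact: inv_ge0_0.
have t_gt0 : 0 < t by rewrite lt_def t_neq0.
case: (prev_rootP Q 0 t) => [Q0|c _ Qc ct no_root|c _ _ no_root].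
- by move: Q_neq0; rewrite Q0 eqxx.
- move: ct; rewrite in_itv /= => /andP[c_gt0 ct].
  apply: (inv_ge0_no_root (ltW c_gt0) ct t_le1).
    by apply: at_roots; rewrite // rootE Qc.
  by move=> z cz zt; apply: no_root; rewrite in_itv /= cz.
- apply: (inv_ge0_no_root (lexx 0) t_gt0 t_le1 inv_ge0_0) => z z_gt0 zt.
  by apply: no_root; rewrite in_itv /= z_gt0.
Qed.

Let count_roots_lt c t : 0 < c -> c < t -> t <= 1 -> root Q c ->
  (count (< c)%O (roots Q 0 1) < count (< t)%O (roots Q 0 1))%N.
Proof.
move=> c_gt0 ct t_le1 Qc; apply: (count_lt_mem ct).
by rewrite root_in_roots // in_itv /= c_gt0 (lt_le_trans ct t_le1).
Qed.

Lemma inv_nonneg_of_unit_ge : (s%:M - B) \in unitmx /\ mx_nonneg (invmx (s%:M - B)).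
Proof.
suff inv_ge0_count k t : 0 <= t -> t <= 1 ->
    (count (< t)%O (roots Q 0 1) <= k)%N -> inv_ge0 t.
  have H1 : H 1 = s%:M - B by rewrite /H scale1r.
  rewrite -H1; split; first exact: H_unit.
  exact: (inv_ge0_count _ 1 ler01 (lexx 1) (leqnn _)).
elim: k t => [|k IHk] t t_ge0 t_le1 count_le; apply: inv_ge0_roots => // c c_gt0 ct Qc.
  by have := leq_trans (count_roots_lt c_gt0 ct t_le1 Qc) count_le.
apply: IHk; rewrite ?ltW //; first lra.
by rewrite -ltnS (leq_trans (count_roots_lt c_gt0 ct t_le1 Qc)).
Qed.

End InverseNonnegHomotopy.

Section PerronFrobenius.
Variable R : rcfType.
Local Notation cplx := (map_mx (real_complex R)).

Lemma normc_real (a : R) : normc (real_complex R a) = `|a|.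
Proof. by rewrite /= expr0n /= addr0 sqrtr_sqr. Qed.

Lemma normc_ge0 (z : R[i]) : 0 <= normc z.
Proof. by case: z => a b /=; rewrite sqrtr_ge0. Qed.

Definition normv n (v : 'rV[R[i]]_n) : 'rV[R]_n := map_mx (@normc R) v.

Lemma normv_ge0 n (v : 'rV[R[i]]_n) : mx_nonneg (normv v).
Proof. by move=> i j; rewrite mxE normc_ge0. Qed.

Lemma normv_eq0 n (v : 'rV[R[i]]_n) : (normv v == 0) = (v == 0).
Proof.
apply/eqP/eqP => [v0|->]; apply/matrixP => i j; rewrite !mxE ?normc0 //.
by apply: eq0_normc; move/matrixP/(_ i j): v0; rewrite !mxE.
Qed.

Lemma normv_eigen n (v : 'rV[R[i]]_n) (B : 'M[R]_n) (l : R[i]) :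
  mx_nonneg B -> v *m cplx B = l *: v -> mx_le (normc l *: normv v) (normv v *m B).
Proof.
move=> B_ge0 vB i j; move/matrixP/(_ i j)/(congr1 (@normc R)): vB.
rewrite !mxE normcM => <-.
apply: le_trans (ler_norm_sum (V := Rcomplex R) _ _ _) _; apply: ler_sum => k _.
by rewrite !mxE -[`|_|]/(normc _) normcM normc_real ger0_norm.
Qed.

Lemma lt_of_subinvariant n (C : 'M[R]_n) (y : 'rV[R]_n) (a s : R) :
  mx_nonneg y -> y != 0 -> mx_le (a *: y) (y *m C) ->
  (s%:M - C) \in unitmx -> mx_nonneg (invmx (s%:M - C)) -> a < s.
Proof.
move=> y_ge0 y_neq0 yC sC_unit W_ge0; rewrite ltNge; apply/negP => s_le_a.
have ysC : mx_le (y *m (s%:M - C)) ((s - a) *: y).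
  by move=> i j; have := yC i j; rewrite mulmxBr mul_mx_scalar !mxE; lra.
have := mx_le_mulr W_ge0 ysC; rewrite -mulmxA mulmxV // mulmx1 -scalemxAl => y_le.
move/eqP: y_neq0; apply; apply/matrixP => i j; apply/eqP.
rewrite mxE eq_le y_ge0 andbT (le_trans (y_le i j)) // mxE mulr_le0_ge0 //; first lra.
exact: mx_nonneg_mul.
Qed.

Lemma sr_lt_of_unit_ge n (B : 'M[R]_n) s : mx_nonneg B -> 0 < s ->
  (forall u, s <= u -> (u%:M - B) \in unitmx) -> rho B < s.
Proof.
move=> B_ge0 s_gt0 unitB.
have [sB_unit W_ge0] := inv_nonneg_of_unit_ge B_ge0 s_gt0 unitB.
have [rho_gt0|] := ltP 0 (rho B); last by move/le_lt_trans; apply.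
have [l /spectrumP[v vB v_neq0] <-] := sr_attained rho_gt0.
apply: lt_of_subinvariant (normv_eigen B_ge0 vB) sB_unit W_ge0.
  exact: normv_ge0.
by rewrite normv_eq0.
Qed.

Lemma sr_spectrum n (T : 'M[R]_n) :
  mx_nonneg T -> 0 < rho T -> real_complex R (rho T) \in spectrum T.
Proof.
move=> T_ge0 rho_gt0; apply: contraT => rho_notin.
suff : rho T < rho T by rewrite ltxx.
apply: sr_lt_of_unit_ge => // u rho_le_u; apply: contraT => /spectrum_real uT.
have [u_rho|u_neq] := eqVneq u (rho T); first by rewrite -u_rho uT in rho_notin.
have := normc_le_sr uT; rewrite normc_real ger0_norm ?(le_trans (sr_ge0 T)) //.
by move=> u_le; move: u_neq; rewrite eq_le u_le rho_le_u.
Qed.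

Lemma sr_lt_inv_nonneg n (B : 'M[R]_n) s : mx_nonneg B -> rho B < s ->
  (s%:M - B) \in unitmx /\ mx_nonneg (invmx (s%:M - B)).
Proof.
move=> B_ge0 rho_lt; have s_gt0 := le_lt_trans (sr_ge0 B) rho_lt.
apply: inv_nonneg_of_unit_ge => // u s_le_u.
apply: contraT => /spectrum_real/normc_le_sr.
by rewrite normc_real ger0_norm; lra.
Qed.

Lemma sr_le_mx_le n (B C : 'M[R]_n) : mx_nonneg B -> mx_le B C -> rho B <= rho C.
Proof.
move=> B_ge0 BC; apply: sr_le (sr_ge0 C) _ => l /spectrumP[v vB v_neq0].
rewrite leNgt; apply/negP => C_lt.
have C_ge0 : mx_nonneg C by move=> i j; apply: le_trans (B_ge0 i j) (BC i j).
have [C_unit W_ge0] := sr_lt_inv_nonneg C_ge0 C_lt.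
have vC : mx_le (normc l *: normv v) (normv v *m C).
  exact: mx_le_trans (normv_eigen B_ge0 vB) (mx_le_mull (normv_ge0 v) BC).
suff : normc l < normc l by rewrite ltxx.
by apply: lt_of_subinvariant vC C_unit W_ge0; [exact: normv_ge0 | rewrite normv_eq0].
Qed.

Lemma sr_mulC p q (X : 'M[R]_(p, q)) (Y : 'M[R]_(q, p)) : rho (X *m Y) = rho (Y *m X).
Proof.
wlog suff : p q X Y / rho (X *m Y) <= rho (Y *m X).
  by move=> sr_le_swap; apply/eqP; rewrite eq_le !sr_le_swap.
apply: sr_le (sr_ge0 _) _ => l /spectrumP[v vXY v_neq0].
have [->|l_neq0] := eqVneq l 0; first by rewrite normc0 sr_ge0.
apply: normc_le_sr; apply/spectrumP; exists (v *m cplx X).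
  by rewrite map_mxM !mulmxA -(mulmxA v) -map_mxM vXY -scalemxAl.
apply: contra_neq v_neq0 => vX0; apply/eqP.
move: vXY; rewrite map_mxM mulmxA vX0 mul0mx => /esym/eqP.
by rewrite scaler_eq0 (negPf l_neq0).
Qed.

Lemma sr_scale n (M : 'M[R]_n) (c : R) : 0 < c -> rho (c *: M) <= c * rho M.
Proof.
move=> c_gt0; apply: sr_le; first by rewrite mulr_ge0 ?sr_ge0 ?ltW.
move=> l /spectrumP[v vM v_neq0].
have c_neq0 : real_complex R c != 0 by rewrite fmorph_eq0 gt_eqF.
have lc_spec : l / real_complex R c \in spectrum M.
  apply/spectrumP; exists v => //; move: vM; rewrite map_mxZ -scalemxAr => vM.
  by rewrite -[v *m _](scalerK c_neq0) vM scalerA mulrC.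
have := normc_le_sr lc_spec; rewrite normcM normcV.
by rewrite normc_real gtr0_norm // ler_pdivrMr // mulrC.
Qed.

Lemma sr_mul_le_scale m n (W : 'M[R]_(n, m)) (V1 V2 : 'M[R]_(m, n)) (alpha : R) :
  mx_nonneg W -> 0 < alpha -> mx_le V1 (alpha *: V2) ->
  mx_nonneg (W *m V1) \/ mx_nonneg (V1 *m W) ->
  rho (W *m V1) <= alpha * rho (W *m V2).
Proof.
move=> W_ge0 alpha_gt0 V12 [WV1_ge0|V1W_ge0].
  apply: le_trans (sr_scale _ alpha_gt0); apply: sr_le_mx_le => //.
  by rewrite scalemxAr; apply: mx_le_mull.
rewrite (sr_mulC W V1) (sr_mulC W V2); apply: le_trans (sr_scale _ alpha_gt0).
apply: sr_le_mx_le => //.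
by rewrite scalemxAl; apply: mx_le_mulr.
Qed.

End PerronFrobenius.

Section FractionalSpectralRadius.
Variable R : rcfType.
Local Notation cplx := (map_mx (real_complex R)).

Lemma spectrum_fraction n (P G : 'M[R]_n) mu : G *m (1%:M - P) = P ->
  mu \in spectrum G -> 1 + mu != 0 /\ mu / (1 + mu) \in spectrum P.
Proof.
move=> GP /spectrumP[v vG v_neq0].
have vP : (1 + mu) *: (v *m cplx P) = mu *: v.
  have GPc : cplx G *m (1%:M - cplx P) = cplx P.
    by rewrite -(map_mx1 (real_complex R)) -map_mxB -map_mxM GP.
  rewrite scalerDl scale1r -{1}GPc mulmxA vG -scalemxAl mulmxBr mulmx1.
  by rewrite scalerBr subrK.
have mu1_neq0 : 1 + mu != 0.
  apply/eqP => mu1; have mu_neq0 : mu != 0.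
    by move: mu1; apply: contra_eqN => /eqP->; rewrite addr0 oner_eq0.
  move/eqP: vP; rewrite mu1 scale0r eq_sym scaler_eq0.
  by rewrite (negPf mu_neq0) (negPf v_neq0).
split=> //; apply/spectrumP; exists v => //.
by rewrite -[v *m _](scalerK mu1_neq0) vP scalerA mulrC.
Qed.

Lemma sr_fraction_le n (P G : 'M[R]_n) : rho P < 1 -> G *m (1%:M - P) = P ->
  rho G <= rho P / (1 - rho P).
Proof.
move=> rho_lt1 GP; have rho_ge0 := sr_ge0 P.
apply: sr_le; first by rewrite divr_ge0 // subr_ge0 ltW.
move=> mu /(spectrum_fraction GP)[mu1_neq0 la_spec].
set la := mu / (1 + mu) in la_spec.
(* [|mu| = |la| / |1 - la| <= |la| / (1 - |la|)], and [x / (1 - x)] increases. *)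
have la_le := normc_le_sr la_spec.
have mu_la : normc mu * normc (1 - la) = normc la.
  by rewrite -normcM; congr normc; rewrite /la; field.
have la1 : 1 - normc la <= normc (1 - la).
  by have := le_normcD (1 - la) la; rewrite subrK normc1; lra.
have mu_ge0 := normc_ge0 mu.
rewrite ler_pdivlMr ?subr_gt0 //.
have : normc mu * (1 - normc la) <= normc mu * normc (1 - la) by rewrite ler_wpM2l.
have : 0 <= normc mu * (rho P - normc la) by rewrite mulr_ge0 ?subr_ge0.
nra.
Qed.

Lemma sr_fraction_ge n (P G : 'M[R]_n) : mx_nonneg P -> rho P < 1 ->
  G *m (1%:M - P) = P -> rho P / (1 - rho P) <= rho G.
Proof.
move=> P_ge0 rho_lt1 GP; have rho_ge0 := sr_ge0 P.
have [->|rho_neq0] := eqVneq (rho P) 0; first by rewrite mul0r sr_ge0.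
have rho_gt0 : 0 < rho P by rewrite lt_def rho_neq0.
have /spectrumP[v vP v_neq0] := sr_spectrum P_ge0 rho_gt0.
have [IP_unit _] := sr_lt_inv_nonneg P_ge0 rho_lt1.
have GE : G = P *m invmx (1%:M - P) by rewrite -{1}GP mulmxK.
have c1_neq0 : real_complex R (1 - rho P) != 0 by rewrite fmorph_eq0 subr_eq0 gt_eqF.
have v_IP : v *m cplx (1%:M - P) = real_complex R (1 - rho P) *: v.
  by rewrite map_mxB map_mx1 mulmxBr mulmx1 vP rmorphB rmorph1 scalerBl scale1r.
have v_invIP : v *m cplx (invmx (1%:M - P)) = (real_complex R (1 - rho P))^-1 *: v.
  apply: (canRL (scalerK c1_neq0)).
  by rewrite scalemxAl -v_IP -mulmxA -map_mxM mulmxV // map_mx1 mulmx1.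
have G_spec : real_complex R (rho P / (1 - rho P)) \in spectrum G.
  apply/spectrumP; exists v => //.
  by rewrite GE map_mxM mulmxA vP -scalemxAl v_invIP scalerA rmorphM fmorphV.
by have := normc_le_sr G_spec; rewrite normc_real ger0_norm // divr_ge0 // subr_ge0 ltW.
Qed.

Lemma sr_fraction n (P G : 'M[R]_n) : mx_nonneg P -> rho P < 1 ->
  G *m (1%:M - P) = P -> rho G = rho P / (1 - rho P).
Proof.
by move=> P_ge0 rho_lt1 GP; apply/eqP; rewrite eq_le sr_fraction_le ?sr_fraction_ge.
Qed.

Lemma fraction_nonneg n (P G : 'M[R]_n) : mx_nonneg P -> rho P < 1 ->
  G *m (1%:M - P) = P -> mx_nonneg G.
Proof.
move=> P_ge0 rho_lt1 GP; have [IP_unit W_ge0] := sr_lt_inv_nonneg P_ge0 rho_lt1.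
by rewrite -[G](mulmxK IP_unit) GP; apply: mx_nonneg_mul.
Qed.

End FractionalSpectralRadius.

Section ProperSplittings.
Variable R : rcfType.

Lemma null_eq_mul m n p (U A : 'M[R]_(m, n)) (M : 'M[R]_(n, p)) :
  null_eq U A -> U *m M = 0 -> A *m M = 0.
Proof.
move=> UA UM0; apply/matrixP => i j.
have /(UA _).1 : U *m col j M = 0 by rewrite colE mulmxA UM0 mul0mx.
by rewrite colE mulmxA -colE => /matrixP/(_ i 0); rewrite !mxE.
Qed.

Lemma MP_null_eq m n (A U : 'M[R]_(m, n)) Ad Ud :
  is_MP_inverse A Ad -> is_MP_inverse U Ud -> null_eq U A ->
  Ad *m A = Ud *m U /\ A *m (Ud *m U) = A.
Proof.
move=> [A1 _ _ A4] [U1 _ _ U4] UA.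
have AU : null_eq A U by move=> x; split => /(UA x).
have A_UdU : A *m (Ud *m U) = A.
  apply/eqP; rewrite -subr_eq0 -[X in _ - X]mulmx1 -mulmxBr; apply/eqP.
  by apply: (null_eq_mul UA); rewrite mulmxBr mulmx1 mulmxA U1 subrr.
have U_AdA : U *m (Ad *m A) = U.
  apply/eqP; rewrite -subr_eq0 -[X in _ - X]mulmx1 -mulmxBr; apply/eqP.
  by apply: (null_eq_mul AU); rewrite mulmxBr mulmx1 mulmxA A1 subrr.
split => //.
have AdA : Ad *m A = Ad *m A *m (Ud *m U) by rewrite -mulmxA A_UdU.
have UdU : Ud *m U = Ud *m U *m (Ad *m A) by rewrite -mulmxA U_AdA.
by rewrite -A4 AdA trmx_mul U4 A4 -UdU.
Qed.

Lemma MP_range_eq m n (A U : 'M[R]_(m, n)) Ad Ud :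
  is_MP_inverse A Ad -> is_MP_inverse U Ud -> range_eq U A ->
  A *m Ad = U *m Ud /\ U *m Ud *m A = A.
Proof.
move=> [A1 _ A3 _] [U1 _ U3 _] /andP[/submxP[D1 UD1] /submxP[D2 AD2]].
have UD2 : A = U *m D2^T by rewrite -[A]trmxK AD2 trmx_mul trmxK.
have AD1 : U = A *m D1^T by rewrite -[U]trmxK UD1 trmx_mul trmxK.
have UUdA : U *m Ud *m A = A by rewrite {1}UD2 mulmxA U1 -UD2.
have AAdU : A *m Ad *m U = U by rewrite {1}AD1 mulmxA A1 -AD1.
split => //.
have AAd : A *m Ad = U *m Ud *m (A *m Ad) by rewrite mulmxA UUdA.
have UUd : U *m Ud = A *m Ad *m (U *m Ud) by rewrite mulmxA AAdU.
by rewrite -A3 AAd trmx_mul A3 U3 -UUd.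
Qed.

Lemma proper_splitting_relI m n (A U V : 'M[R]_(m, n)) Ad Ud :
  is_MP_inverse A Ad -> is_MP_inverse U Ud -> proper_splitting A U V ->
  (Ad *m V) *m (1%:M - Ud *m V) = Ud *m V.
Proof.
move=> MPA MPU [AUV [UA_range UA_null]].
have [AdA _] := MP_null_eq MPA MPU UA_null.
have [_ UUdA] := MP_range_eq MPA MPU UA_range.
have [U1 U2 _ _] := MPU.
have VUA : V = U - A by rewrite AUV opprB addrC subrK.
have UUdV : U *m (Ud *m V) = V by rewrite mulmxA {1}VUA mulmxBr U1 UUdA -VUA.
rewrite mulmxBr mulmx1 -mulmxA {2}VUA mulmxBl UUdV mulmxBr (mulmxA Ad A) AdA.
by rewrite (mulmxA (Ud *m U)) U2 opprB addrC subrK.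
Qed.

Lemma proper_splitting_relII m n (A U V : 'M[R]_(m, n)) Ad Ud :
  is_MP_inverse A Ad -> is_MP_inverse U Ud -> proper_splitting A U V ->
  (1%:M - V *m Ud) *m (V *m Ad) = V *m Ud.
Proof.
move=> MPA MPU [AUV [UA_range UA_null]].
have [_ A_UdU] := MP_null_eq MPA MPU UA_null.
have [AAd _] := MP_range_eq MPA MPU UA_range.
have [U1 U2 _ _] := MPU.
have VUA : V = U - A by rewrite AUV opprB addrC subrK.
have VUdU : V *m Ud *m U = V by rewrite -mulmxA {1}VUA mulmxBl mulmxA U1 A_UdU -VUA.
rewrite mulmxBl mul1mx mulmxA {3}VUA mulmxBr VUdU mulmxBl -(mulmxA _ A) AAd.
by rewrite -(mulmxA V Ud) (mulmxA Ud U Ud) U2 opprB addrC subrK.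
Qed.

Lemma pns_sr_MP m n (A U V : 'M[R]_(m, n)) (Ad Ud : 'M[R]_(n, m)) :
  is_MP_inverse A Ad -> is_MP_inverse U Ud ->
  pns_typeI A U V Ud \/ pns_typeII A U V Ud -> rho (Ud *m V) < 1 ->
  (mx_nonneg (Ad *m V) \/ mx_nonneg (V *m Ad)) /\
  rho (Ad *m V) = rho (Ud *m V) / (1 - rho (Ud *m V)).
Proof.
move=> MPA MPU [[UV P_ge0]|[UV P_ge0]] conv.
  have GP := proper_splitting_relI MPA MPU UV.
  by split; [left; apply: fraction_nonneg GP | apply: sr_fraction GP].
rewrite sr_mulC in conv; rewrite (sr_mulC Ad) (sr_mulC Ud).
have [IP_unit _] := sr_lt_inv_nonneg P_ge0 conv.
have GP := mulmx_1B_sym IP_unit (proper_splitting_relII MPA MPU UV).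
by split; [right; apply: fraction_nonneg GP | apply: sr_fraction GP].
Qed.

End ProperSplittings.

Theorem theorem4p6 (R : rcfType) (m n : nat)
  (A U1 V1 U2 V2 : 'M[R]_(m, n)) (Ad U1d U2d : 'M[R]_(n, m)) (alpha : R) :
  is_MP_inverse A Ad -> is_MP_inverse U1 U1d -> is_MP_inverse U2 U2d ->
  mx_nonneg Ad ->
  (pns_typeI A U1 V1 U1d /\ pns_typeII A U2 V2 U2d \/
   pns_typeII A U1 V1 U1d /\ pns_typeI A U2 V2 U2d) ->
  convergent_splitting U1 V1 U1d -> convergent_splitting U2 V2 U2d ->
  0 < alpha -> alpha <= 1 ->
  mx_le V1 (alpha *: V2) ->
  (0 < spectral_radius (Ad *m V1) \/ 0 < spectral_radius (Ad *m V2)) ->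
  (alpha = 1 ->
     spectral_radius (U1d *m V1) <= spectral_radius (U2d *m V2) /\
     spectral_radius (U2d *m V2) < 1) /\
  (alpha < 1 ->
     spectral_radius (U1d *m V1) < spectral_radius (U2d *m V2) /\
     spectral_radius (U2d *m V2) < 1).
Proof.
rewrite /convergent_splitting.
move=> MPA MPU1 MPU2 Ad_ge0 types conv1 conv2 alpha_gt0 _ V12 rho_gt0.
have [types1 types2] : (pns_typeI A U1 V1 U1d \/ pns_typeII A U1 V1 U1d) /\
    (pns_typeI A U2 V2 U2d \/ pns_typeII A U2 V2 U2d).
  by case: types => -[]; split; auto.
have [V1_ge0 rho1E] := pns_sr_MP MPA MPU1 types1 conv1.
have [_ rho2E] := pns_sr_MP MPA MPU2 types2 conv2.
have le12 := sr_mul_le_scale Ad_ge0 alpha_gt0 V12 V1_ge0.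
have rho2_gt0 : 0 < rho (Ad *m V2).
  case: rho_gt0 => [rho1_gt0|rho2_gt0]; last exact: rho2_gt0.
  by rewrite -(pmulr_rgt0 _ alpha_gt0); apply: lt_le_trans rho1_gt0 le12.
rewrite {}rho1E {}rho2E in le12 rho2_gt0.
split=> [alpha1|alpha_lt1]; split; try exact: conv2.
  by rewrite -(ler_odds conv1 conv2); move: le12; rewrite alpha1 mul1r.
rewrite -(ltr_odds conv1 conv2); apply: le_lt_trans le12 _.
by rewrite gtr_pMl.
Qed.
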